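(* Let $\bm X\in\mathbb{R}_+^{m\times n}$, let $(\bm W^k,\bm H^k)\in\mathbb{R}_{++}^{m\times r}\times\mathbb{R}_{++}^{r\times n}$, and let $\phi$ and $\hat f_k$ be as defined below. Then for any $L_k>0$ with $$L_k\ge\max\Big\{\max_{i\in[m],l\in[r]}\sum_{j=1}^n\alpha^k_{ilj}X_{ij},\ \max_{l\in[r],j\in[n]}\sum_{i=1}^m\alpha^k_{ilj}X_{ij},\ m,\ n\Big\},$$ both $L_k\phi-\hat f_k$ and $L_k\phi+\hat f_k$ are convex on $\mathbb{R}_{++}^{m\times r}\times\mathbb{R}_{++}^{r\times n}$, i.e. $(\hat f_k,\phi)$ is $L_k$-smad there. Consequently, for every $L\ge\max\{\max_i\sum_jX_{ij},\ \max_j\sum_iX_{ij},\ m,\ n\}$, the pair $(\hat f_k,\phi)$ is $L$-smad on $\mathbb{R}_{++}^{m\times r}\times\mathbb{R}_{++}^{r\times n}$ for every $k$ and every choice of $(\bm W^k,\bm H^k)$.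
   Context: $[n]=\{1,\dots,n\}$. Kernel: $\phi(\bm W,\bm H)=\sum_{i=1}^m\sum_{l=1}^r\big(-\log W_{il}+\tfrac12W_{il}^2\big)+\sum_{l=1}^r\sum_{j=1}^n\big(-\log H_{lj}+\tfrac12H_{lj}^2\big)$, with domain $\mathbb{R}_{++}^{m\times r}\times\mathbb{R}_{++}^{r\times n}$. Given $(\bm W^k,\bm H^k)$ with positive entries, $\alpha^k_{ilj}=\frac{W^k_{il}H^k_{lj}}{\sum_{l'=1}^rW^k_{il'}H^k_{l'j}}$ and $\hat f_k(\bm W,\bm H)=\sum_{i,j}\Big(X_{ij}\log X_{ij}-X_{ij}\sum_{l=1}^r\alpha^k_{ilj}\log\frac{W_{il}H_{lj}}{\alpha^k_{ilj}}-X_{ij}+(\bm W\bm H)_{ij}\Big)$ (convention $0\log0=0$). A pair $(h,\phi)$ is $L$-smad on an open convex set $C$ if $L\phi-h$ and $L\phi+h$ are convex on $C$. *)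

From mathcomp Require Import all_boot all_order all_algebra.
From mathcomp Require Import all_classical all_reals.
From mathcomp Require Import exp.
Set Implicit Arguments. Unset Strict Implicit. Unset Printing Implicit Defensive.
Import Order.TTheory GRing.Theory Num.Theory.
Local Open Scope ring_scope.

Section Defs.
Variable R : realType.

Definition pt (m r n : nat) := ('M[R]_(m, r) * 'M[R]_(r, n))%type.

Definition posmx (p q : nat) (A : 'M[R]_(p, q)) : Prop := forall i j, 0 < A i j.

Definition posdom (m r n : nat) (x : pt m r n) : Prop := posmx x.1 /\ posmx x.2.

Definition comb (m r n : nat) (t : R) (x y : pt m r n) : pt m r n :=
  (t *: x.1 + (1 - t) *: y.1, t *: x.2 + (1 - t) *: y.2).

Definition convex_on (m r n : nat) (C : pt m r n -> Prop) (f : pt m r n -> R) : Prop :=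
  forall (x y : pt m r n) (t : R), C x -> C y -> 0 <= t -> t <= 1 ->
    f (comb t x y) <= t * f x + (1 - t) * f y.

Definition smad (m r n : nat) (L : R) (h phi : pt m r n -> R) (C : pt m r n -> Prop) : Prop :=
  convex_on C (fun x => L * phi x - h x) /\ convex_on C (fun x => L * phi x + h x).

Definition kernel_phi (m r n : nat) (x : pt m r n) : R :=
  \sum_(i < m) \sum_(l < r) (- ln (x.1 i l) + (x.1 i l) ^+ 2 / 2)
  + \sum_(l < r) \sum_(j < n) (- ln (x.2 l j) + (x.2 l j) ^+ 2 / 2).

Definition xlogx (a : R) : R := if a == 0 then 0 else a * ln a.

Definition alpha (m r n : nat) (Wk : 'M[R]_(m, r)) (Hk : 'M[R]_(r, n))
  (i : 'I_m) (l : 'I_r) (j : 'I_n) : R :=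
  Wk i l * Hk l j / (\sum_(l' < r) Wk i l' * Hk l' j).

Definition fhat (m r n : nat) (X : 'M[R]_(m, n)) (Wk : 'M[R]_(m, r)) (Hk : 'M[R]_(r, n))
  (x : pt m r n) : R :=
  \sum_(i < m) \sum_(j < n)
    (xlogx (X i j)
     - X i j * \sum_(l < r) alpha Wk Hk i l j
                 * ln (x.1 i l * x.2 l j / alpha Wk Hk i l j)
     - X i j + (x.1 *m x.2) i j).

End Defs.

From mathcomp Require Import all_boot all_order all_algebra.
From mathcomp Require Import all_classical all_reals.
From mathcomp Require Import interval_inference exp convex.
From mathcomp Require Import ring lra.
Set Implicit Arguments. Unset Strict Implicit. Unset Printing Implicit Defensive.
Import Order.TTheory GRing.Theory Num.Theory.
Local Open Scope ring_scope.

(* On the positive domain the logarithm of a product splits, so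
     f_k = c + sum_il a_il (-ln W_il) + sum_lj b_lj (-ln H_lj) + sum_ijl W_il H_lj
   with a_il = sum_j alpha_ilj X_ij, b_lj = sum_i alpha_ilj X_ij >= 0.  The
   bilinear part is absorbed by completing squares: since each W_il^2 occurs
   n times and each H_lj^2 occurs m times in sum_ijl (W_il +- H_lj)^2, we get
     L phi +- f_k = sum (L +- a)(-ln W) + sum (L +- b)(-ln H)
                    + (L - n) |W|^2/2 + (L - m) |H|^2/2
                    + sum_ijl (W_il +- H_lj)^2/2 +- c,
   a nonnegative combination of convex functions under the bounds on L.
   The uniform bound follows from alpha_ilj <= 1. *)

Section Convexity.
Variables (R : realType) (m r n : nat).
Notation C := (@posdom R m r n).
Implicit Types (x y : pt R m r n) (f g : pt R m r n -> R).

Lemma comb_gt0 (t u v : R) : 0 < u -> 0 < v -> 0 <= t -> t <= 1 ->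
  0 < t * u + (1 - t) * v.
Proof. by move=> u0 v0 t0 t1; apply: (@convR_gt0 R u v (Itv01 t0 t1)). Qed.

Lemma oppr_ln_convex (t u v : R) : 0 < u -> 0 < v -> 0 <= t -> t <= 1 ->
  - ln (t * u + (1 - t) * v) <= t * - ln u + (1 - t) * - ln v.
Proof.
move=> u0 v0 t0 t1; have := @concave_ln R (Itv01 t0 t1) u v u0 v0.
by rewrite !convRE /= /unstable.onem; lra.
Qed.

Lemma comb_fstE t x y i l : (comb t x y).1 i l = t * x.1 i l + (1 - t) * y.1 i l.
Proof. by rewrite !mxE. Qed.

Lemma comb_sndE t x y l j : (comb t x y).2 l j = t * x.2 l j + (1 - t) * y.2 l j.
Proof. by rewrite !mxE. Qed.

Lemma posdom_comb t x y : C x -> C y -> 0 <= t -> t <= 1 -> C (comb t x y).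
Proof.
by move=> [x1 x2] [y1 y2] t0 t1; split=> i j;
  rewrite ?comb_fstE ?comb_sndE; apply: comb_gt0.
Qed.

Lemma convex_on_eq f g : (forall x, C x -> f x = g x) ->
  convex_on C g -> convex_on C f.
Proof.
move=> fg cg x y t Cx Cy t0 t1.
by rewrite !fg //; [exact: cg | exact: posdom_comb].
Qed.

Lemma convex_onD f g : convex_on C f -> convex_on C g ->
  convex_on C (fun x => f x + g x).
Proof.
move=> cf cg x y t Cx Cy t0 t1.
by have := cf x y t Cx Cy t0 t1; have := cg x y t Cx Cy t0 t1; lra.
Qed.

Lemma convex_onZ (c : R) f : 0 <= c -> convex_on C f ->
  convex_on C (fun x => c * f x).
Proof.
move=> c0 cf x y t Cx Cy t0 t1.
by have := ler_wpM2l c0 (cf x y t Cx Cy t0 t1); lra.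
Qed.

Lemma convex_on_cst (c : R) : convex_on C (fun=> c).
Proof. by move=> x y t _ _ _ _; lra. Qed.

Lemma convex_on_sum (I : finType) (F : I -> pt R m r n -> R) :
  (forall i, convex_on C (F i)) -> convex_on C (fun x => \sum_i F i x).
Proof.
move=> cF x y t Cx Cy t0 t1.
by rewrite !mulr_sumr -big_split; apply: ler_sum => i _; apply: cF.
Qed.

Lemma convex_on_oppr_ln_fst i l : convex_on C (fun x => - ln (x.1 i l)).
Proof.
by move=> x y t [x1 _] [y1 _] t0 t1; rewrite comb_fstE; apply: oppr_ln_convex.
Qed.

Lemma convex_on_oppr_ln_snd l j : convex_on C (fun x => - ln (x.2 l j)).
Proof.
by move=> x y t [_ x2] [_ y2] t0 t1; rewrite comb_sndE; apply: oppr_ln_convex.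
Qed.

Lemma convex_on_half_sqr g :
  (forall t x y, g (comb t x y) = t * g x + (1 - t) * g y) ->
  convex_on C (fun x => g x ^+ 2 / 2).
Proof.
move=> g_affine x y t _ _ t0 t1; rewrite g_affine.
have : 0 <= t * (1 - t) * (g x - g y) ^+ 2.
  by apply: mulr_ge0; [apply: mulr_ge0; lra | exact: sqr_ge0].
by nra.
Qed.

End Convexity.

Lemma sum2_affine_mul (R : comPzRingType) (I J : finType) (c d : R) (A F : I -> J -> R) :
  \sum_i \sum_j (c + d * A i j) * F i j =
  c * \sum_i \sum_j F i j + d * \sum_i \sum_j A i j * F i j.
Proof.
rewrite !mulr_sumr -big_split; apply: eq_bigr => i _ /=.
by rewrite !mulr_sumr -big_split; apply: eq_bigr => j _ /=; ring.
Qed.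

Section Kernel.
Variables (R : realType) (m r n : nat).
Implicit Types x : pt R m r n.

Definition halfsq_fst x := \sum_(i < m) \sum_(l < r) x.1 i l ^+ 2 / 2.
Definition halfsq_snd x := \sum_(l < r) \sum_(j < n) x.2 l j ^+ 2 / 2.

Lemma kernel_phiE x : kernel_phi x =
  \sum_(i < m) \sum_(l < r) - ln (x.1 i l) + halfsq_fst x
  + (\sum_(l < r) \sum_(j < n) - ln (x.2 l j) + halfsq_snd x).
Proof.
by rewrite /kernel_phi /halfsq_fst /halfsq_snd;
  congr (_ + _); under eq_bigr => ? _ do rewrite big_split; rewrite big_split.
Qed.

Lemma sum_halfsq_split (e : R) x : e * e = 1 ->
  \sum_(i < m) \sum_(j < n) \sum_(l < r) (x.1 i l + e * x.2 l j) ^+ 2 / 2 =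
  n%:R * halfsq_fst x + e * \sum_(i < m) \sum_(j < n) \sum_(l < r) x.1 i l * x.2 l j
  + m%:R * halfsq_snd x.
Proof.
move=> ee1.
have sq_split (a b : R) :
    (a + e * b) ^+ 2 / 2 = a ^+ 2 / 2 + e * (a * b) + b ^+ 2 / 2.
  have -> : (a + e * b) ^+ 2 / 2 = a ^+ 2 / 2 + e * (a * b) + e * e * (b ^+ 2 / 2)
    by field.
  by rewrite ee1 mul1r.
have sum_fst : \sum_(i < m) \sum_(j < n) \sum_(l < r) x.1 i l ^+ 2 / 2 =
    n%:R * halfsq_fst x.
  rewrite /halfsq_fst mulr_sumr; apply: eq_bigr => i _.
  rewrite exchange_big mulr_sumr; apply: eq_bigr => l _.
  by rewrite sumr_const card_ord mulr_natl.
have sum_snd : \sum_(i < m) \sum_(j < n) \sum_(l < r) x.2 l j ^+ 2 / 2 =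
    m%:R * halfsq_snd x.
  by rewrite sumr_const card_ord /halfsq_snd exchange_big mulr_natl.
rewrite -sum_fst -sum_snd mulr_sumr -!big_split /=; apply: eq_bigr => i _.
rewrite mulr_sumr -!big_split /=; apply: eq_bigr => j _.
by rewrite mulr_sumr -!big_split /=; apply: eq_bigr => l _.
Qed.

End Kernel.

Section Surrogate.
Variables (R : realType) (m r n : nat) (X : 'M[R]_(m, n)).
Variables (Wk : 'M[R]_(m, r)) (Hk : 'M[R]_(r, n)).
Hypotheses (Wk_gt0 : posmx Wk) (Hk_gt0 : posmx Hk).
Notation alpha := (alpha Wk Hk).

Lemma mulWH_le_alpha_den i l j :
  Wk i l * Hk l j <= \sum_(l' < r) Wk i l' * Hk l' j.
Proof.
rewrite (bigD1 l) //= lerDl; apply: sumr_ge0 => l' _.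
by apply: mulr_ge0; apply: ltW.
Qed.

Lemma alpha_gt0 i l j : 0 < alpha i l j.
Proof.
have WH_gt0 := mulr_gt0 (Wk_gt0 i l) (Hk_gt0 l j).
apply: divr_gt0 => //; exact: lt_le_trans (mulWH_le_alpha_den i l j).
Qed.

Lemma alpha_le1 i l j : alpha i l j <= 1.
Proof.
have WH_gt0 := mulr_gt0 (Wk_gt0 i l) (Hk_gt0 l j).
rewrite ler_pdivrMr ?mul1r; first exact: mulWH_le_alpha_den.
exact: lt_le_trans (mulWH_le_alpha_den i l j).
Qed.

(* The coefficients a_il, b_lj and the constant c of the decomposition of f_k. *)
Definition weightW i l := \sum_(j < n) alpha i l j * X i j.
Definition weightH l j := \sum_(i < m) alpha i l j * X i j.
Definition fhat_const := \sum_(i < m) \sum_(j < n)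
  (xlogx (X i j) - X i j + X i j * \sum_(l < r) alpha i l j * ln (alpha i l j)).

Lemma fhat_entryE (x : pt R m r n) i j : posdom x ->
  xlogx (X i j)
  - X i j * \sum_(l < r) alpha i l j * ln (x.1 i l * x.2 l j / alpha i l j)
  - X i j + (x.1 *m x.2) i j =
  (xlogx (X i j) - X i j + X i j * \sum_(l < r) alpha i l j * ln (alpha i l j))
  + \sum_(l < r) X i j * alpha i l j * - ln (x.1 i l)
  + \sum_(l < r) X i j * alpha i l j * - ln (x.2 l j)
  + \sum_(l < r) x.1 i l * x.2 l j.
Proof.
move=> [x1_gt0 x2_gt0]; rewrite mxE.
have ln_split l : ln (x.1 i l * x.2 l j / alpha i l j) =
    ln (x.1 i l) + ln (x.2 l j) - ln (alpha i l j).
  have WH_gt0 := mulr_gt0 (x1_gt0 i l) (x2_gt0 l j).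
  by rewrite ln_div ?posrE ?alpha_gt0 // lnM ?posrE.
under eq_bigr => l _ do rewrite ln_split !mulrDr mulrN.
rewrite !big_split /= sumrN.
have sum_neg_ln (F : 'I_r -> R) : \sum_(l < r) X i j * alpha i l j * - ln (F l)
    = - (X i j * \sum_(l < r) alpha i l j * ln (F l)).
  by rewrite mulr_sumr -sumrN; apply: eq_bigr => l _; ring.
by rewrite (sum_neg_ln (x.1 i)) (sum_neg_ln (fun l => x.2 l j)); ring.
Qed.

Lemma fhatE (x : pt R m r n) : posdom x ->
  fhat X Wk Hk x = fhat_const
    + \sum_(i < m) \sum_(l < r) weightW i l * - ln (x.1 i l)
    + \sum_(l < r) \sum_(j < n) weightH l j * - ln (x.2 l j)
    + \sum_(i < m) \sum_(j < n) \sum_(l < r) x.1 i l * x.2 l j.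
Proof.
move=> Cx; rewrite /fhat.
under eq_bigr => i _.
  by under eq_bigr => j _ do rewrite fhat_entryE //; over.
under eq_bigr => i _ do rewrite !big_split /=.
rewrite !big_split /=; congr (_ + _ + _ + _).
- by rewrite /fhat_const -!big_split; apply: eq_bigr => i _; rewrite -!big_split.
- rewrite /weightW; apply: eq_bigr => i _; rewrite exchange_big /=.
  by apply: eq_bigr => l _; rewrite mulr_suml; apply: eq_bigr => j _; ring.
- rewrite /weightH; under eq_bigr => i _ do rewrite exchange_big /=.
  rewrite exchange_big /=; apply: eq_bigr => l _; rewrite exchange_big /=.
  by apply: eq_bigr => j _; rewrite mulr_suml; apply: eq_bigr => i _; ring.
Qed.

Lemma convex_on_kernel_signed (L e : R) : e * e = 1 ->
  (forall i l, 0 <= L + e * weightW i l) -> (forall l j, 0 <= L + e * weightH l j) ->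
  n%:R <= L -> m%:R <= L ->
  convex_on (@posdom R m r n) (fun x => L * kernel_phi x + e * fhat X Wk Hk x).
Proof.
move=> ee1 LW_ge0 LH_ge0 nL mL.
apply: (convex_on_eq (g := fun x =>
  \sum_(i < m) \sum_(l < r) (L + e * weightW i l) * - ln (x.1 i l)
  + \sum_(l < r) \sum_(j < n) (L + e * weightH l j) * - ln (x.2 l j)
  + (L - n%:R) * halfsq_fst x + (L - m%:R) * halfsq_snd x
  + \sum_(i < m) \sum_(j < n) \sum_(l < r) (x.1 i l + e * x.2 l j) ^+ 2 / 2
  + e * fhat_const)).
  move=> x Cx; rewrite fhatE // kernel_phiE sum_halfsq_split // !sum2_affine_mul.
  by ring.
repeat apply: convex_onD; last exact: convex_on_cst.
- by do 2![apply: convex_on_sum => ?]; apply: convex_onZ; last exact: convex_on_oppr_ln_fst.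
- by do 2![apply: convex_on_sum => ?]; apply: convex_onZ; last exact: convex_on_oppr_ln_snd.
- apply: convex_onZ; first by rewrite subr_ge0.
  by do 2![apply: convex_on_sum => ?]; apply: convex_on_half_sqr => *; rewrite comb_fstE.
- apply: convex_onZ; first by rewrite subr_ge0.
  by do 2![apply: convex_on_sum => ?]; apply: convex_on_half_sqr => *; rewrite comb_sndE.
- do 3![apply: convex_on_sum => ?]; apply: convex_on_half_sqr => *.
  by rewrite comb_fstE comb_sndE; ring.
Qed.

Lemma smad_fhat_kernel (L : R) : (forall i j, 0 <= X i j) ->
  (forall i l, weightW i l <= L) -> (forall l j, weightH l j <= L) ->
  m%:R <= L -> n%:R <= L ->
  smad L (fhat X Wk Hk) (@kernel_phi R m r n) (@posdom R m r n).
Proof.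
move=> X_ge0 WL HL mL nL.
have L_ge0 : 0 <= L by apply: le_trans nL.
have alphaX_ge0 i l j : 0 <= alpha i l j * X i j.
  by apply: mulr_ge0; [exact: ltW (alpha_gt0 i l j) | exact: X_ge0].
have W_ge0 i l : 0 <= weightW i l by apply: sumr_ge0.
have H_ge0 l j : 0 <= weightH l j by apply: sumr_ge0.
split.
- apply: (convex_on_eq (g := fun x => L * kernel_phi x + -1 * fhat X Wk Hk x)).
    by move=> x _; rewrite mulN1r.
  apply: convex_on_kernel_signed => //; first by rewrite mulN1r opprK.
    by move=> i l; rewrite mulN1r subr_ge0.
  by move=> l j; rewrite mulN1r subr_ge0.
- apply: (convex_on_eq (g := fun x => L * kernel_phi x + 1 * fhat X Wk Hk x)).
    by move=> x _; rewrite mul1r.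
  apply: convex_on_kernel_signed => //; first by rewrite mul1r.
    by move=> i l; rewrite mul1r addr_ge0.
  by move=> l j; rewrite mul1r addr_ge0.
Qed.

Lemma weightW_le_rowsum i l : (forall j, 0 <= X i j) ->
  weightW i l <= \sum_(j < n) X i j.
Proof.
move=> X_ge0; apply: ler_sum => j _.
by rewrite ler_piMl ?X_ge0 ?alpha_le1.
Qed.

Lemma weightH_le_colsum l j : (forall i, 0 <= X i j) ->
  weightH l j <= \sum_(i < m) X i j.
Proof.
move=> X_ge0; apply: ler_sum => i _.
by rewrite ler_piMl ?X_ge0 ?alpha_le1.
Qed.

End Surrogate.

Theorem mainTheorem6 (R : realType) (m r n : nat) (X : 'M[R]_(m, n)) :
  (forall i j, 0 <= X i j) ->
  (forall (Wk : 'M[R]_(m, r)) (Hk : 'M[R]_(r, n)) (Lk : R),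
     posmx Wk -> posmx Hk -> 0 < Lk ->
     (forall (i : 'I_m) (l : 'I_r), \sum_(j < n) alpha Wk Hk i l j * X i j <= Lk) ->
     (forall (l : 'I_r) (j : 'I_n), \sum_(i < m) alpha Wk Hk i l j * X i j <= Lk) ->
     m%:R <= Lk -> n%:R <= Lk ->
     smad Lk (fhat X Wk Hk) (@kernel_phi R m r n) (@posdom R m r n)) /\
  (forall L : R,
     (forall i : 'I_m, \sum_(j < n) X i j <= L) ->
     (forall j : 'I_n, \sum_(i < m) X i j <= L) ->
     m%:R <= L -> n%:R <= L ->
     forall (Wk : 'M[R]_(m, r)) (Hk : 'M[R]_(r, n)), posmx Wk -> posmx Hk ->
       smad L (fhat X Wk Hk) (@kernel_phi R m r n) (@posdom R m r n)).
Proof.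
move=> X_ge0; split.
  by move=> Wk Hk Lk Wk_gt0 Hk_gt0 _; apply: smad_fhat_kernel.
move=> L rowL colL mL nL Wk Hk Wk_gt0 Hk_gt0.
apply: smad_fhat_kernel => // [i l | l j].
  exact: le_trans (weightW_le_rowsum Wk_gt0 Hk_gt0 l (X_ge0 i)) (rowL i).
exact: le_trans (weightH_le_colsum Wk_gt0 Hk_gt0 l (X_ge0^~ j)) (colL j).
Qed.
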